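(* For every $k\ge1$ there exists a clean universal $k$-URA $\mathcal A_k$ over $(\mathbb N;=)$ and the singleton alphabet $\Sigma=\{\sigma\}$ together with a configuration reachable in $\mathcal A_k$ that contains at least $k!$ distinct states with the same location. In particular $N_k\ge k!$.
   Context: Let $\Sigma$ be a finite alphabet; data words are finite sequences in $(\Sigma\times\mathbb N)^*$. Let $\mathbb N_\bot=\mathbb N\cup\{\bot\}$, $\bot$ equal only to itself. Register constraints over registers $\mathcal R$ are Boolean combinations of atoms $t_1=t_2$ with $t_i\in\{\#\}\cup\{r,\dot r:r\in\mathcal R\}$, interpreted on triples $(\mathbf u,d,\mathbf v)$ (current valuation, input datum, next valuation, valuations $\mathcal R\to\mathbb N_\bot$). A $k$-RA over $(\mathbb N;=)$ is $(\mathcal R,\mathcal L,\ell_{init},\mathcal L_{acc},E)$ with $|\mathcal R|=k$, finite locations, finite edges $(\ell,\sigma,\phi,\ell')$ whose constraints contain for each register $r$ a conjunct $\dot r=r$ or $\dot r=\#$. States are $\ell(\mathbf u)$; the initial state is $\ell_{init}$ with all registers $\bot$; $\ell(\mathbf u)\xrightarrow{\sigma,d}\ell'(\mathbf u')$ if some edge $(\ell,\sigma,\phi,\ell')$ has $(\mathbf u,d,\mathbf u')\models\phi$. A word is accepted from a state if some run on it from that state ends in a state with location in $\mathcal L_{acc}$; $L(\mathcal A)$: words accepted from the initial state; universal means $L(\mathcal A)=(\Sigma\times\mathbb N)^*$. A $k$-URA is a $k$-RA where each data word has at most one initialized accepting run. Clean: every reachable state $\ell(u_1,\dots,u_k)$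 accepts some word and no element of $\mathbb N$ occurs in two different components of $(u_1,\dots,u_k)$. A configuration is a set of states; $\mathrm{succ}(C,(\sigma,d))$ is the set of states reachable by one transition on $(\sigma,d)$ from a state in $C$, extended to words; $C$ is reachable if $C=\mathrm{succ}(\{\text{initial state}\},w)$ for some $w$. $N_k$ denotes the supremum, over all clean universal $k$-URA over $(\mathbb N;=)$ and all their reachable configurations $C$, of the maximal number of distinct states in $C$ sharing the same location. *)

From Stdlib Require List.
From mathcomp Require Import all_boot.
Set Implicit Arguments. Unset Strict Implicit. Unset Printing Implicit Defensive.

Section RA.
Variables (k : nat) (Sigma : Type).

(* A valuation R -> N_bot, registers R = 'I_k, bot = None. *)
Definition valuation := {ffun 'I_k -> option nat}.

(* terms of register constraints: #, r (current), r-dot (next) *)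
Inductive term := Tdat | Tcur of 'I_k | Tnext of 'I_k.

Inductive constr :=
| CAtom of term & term
| CTrue
| CNot of constr
| CAnd of constr & constr
| COr of constr & constr.

Definition eval_term (u : valuation) (d : nat) (v : valuation) (t : term)
  : option nat :=
  match t with Tdat => Some d | Tcur r => u r | Tnext r => v r end.

(* (u, d, v) |= phi ; bot is equal only to itself (option equality) *)
Fixpoint sat (c : constr) (u : valuation) (d : nat) (v : valuation) : Prop :=
  match c with
  | CAtom t1 t2 => eval_term u d v t1 = eval_term u d v t2
  | CTrue => True
  | CNot c1 => ~ sat c1 u d v
  | CAnd c1 c2 => sat c1 u d v /\ sat c2 u d v
  | COr c1 c2 => sat c1 u d v \/ sat c2 u d v
  end.

Fixpoint has_conjunct (c a : constr) : Prop :=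
  c = a \/ match c with
           | CAnd c1 c2 => has_conjunct c1 a \/ has_conjunct c2 a
           | _ => False
           end.

Definition edge_constr_wf (c : constr) : Prop :=
  forall r : 'I_k,
    has_conjunct c (CAtom (Tnext r) (Tcur r)) \/ has_conjunct c (CAtom (Tcur r) (Tnext r))
    \/ has_conjunct c (CAtom (Tnext r) Tdat) \/ has_conjunct c (CAtom Tdat (Tnext r)).

Record RA (n : nat) := MkRA {
  ra_init : 'I_n;
  ra_acc : pred 'I_n;
  ra_edges : seq ('I_n * Sigma * constr * 'I_n);
  ra_edges_wf : forall l a c l', List.In (l, a, c, l') ra_edges -> edge_constr_wf c
}.

Definition word := seq (Sigma * nat).

Section Sem.
Variables (n : nat) (A : RA n).

Definition state := ('I_n * valuation)%type.

Definition init_state : state := (ra_init A, [ffun _ => None]).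

Definition step (s : state) (x : Sigma * nat) (s' : state) : Prop :=
  exists c, List.In (s.1, x.1, c, s'.1) (ra_edges A) /\ sat c s.2 x.2 s'.2.

(* rho = the states visited after the starting state s, one per letter *)
Fixpoint run_from (s : state) (w : word) (rho : seq state) : Prop :=
  match w, rho with
  | [::], [::] => True
  | x :: w', s' :: rho' => step s x s' /\ run_from s' w' rho'
  | _, _ => False
  end.

Definition accepting_run (s : state) (w : word) (rho : seq state) : Prop :=
  run_from s w rho /\ ra_acc A (last s rho).1.

Definition accepts_from (s : state) (w : word) : Prop :=
  exists rho, accepting_run s w rho.

Definition universal : Prop := forall w : word, accepts_from init_state w.

Definition unambiguous : Prop :=
  forall (w : word) rho1 rho2,
    accepting_run init_state w rho1 -> accepting_run init_state w rho2 -> rho1 = rho2.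

Definition in_conf (w : word) (s : state) : Prop :=
  exists rho, run_from init_state w rho /\ last init_state rho = s.

Definition reachable_state (s : state) : Prop := exists w, in_conf w s.

Definition clean : Prop :=
  forall s : state, reachable_state s ->
    (exists w, accepts_from s w) /\
    (forall (i j : 'I_k) (d : nat), i != j -> s.2 i = Some d -> s.2 j <> Some d).

End Sem.
End RA.

(* With K = k registers, the automaton chooses at its first step either a
   permutation q of the registers or a "complement" branch.  Branch q stores
   K pairwise distinct data, the t-th one in register q^-1 t, and then checks
   that the next K data are the register contents read in register order;
   it accepts exactly the words of shape [perm_shaped q], and distinct
   permutations have disjoint shapes.  The complement branch stores the first
   K data (moving to an accepting sink on a repetition), then matches the
   following data against the registers and dies exactly when they enumerate
   all stored data, i.e. on the words of some permutation shape.  So every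
   word has exactly one accepting run, all branches other than the first
   choice are deterministic, and on 0, ..., K-1 the K! permutation branches
   reach K! distinct valuations at the first check location. *)

From HB Require Import structures.
From mathcomp Require Import all_boot fingroup perm.
Set Implicit Arguments. Unset Strict Implicit. Unset Printing Implicit Defensive.

(* A valuation is injective when no datum is stored in two registers; this
   is the register part of cleanness. *)
Definition inj_val (k : nat) (u : valuation k) : Prop :=
  forall i j d, u i = Some d -> u j = Some d -> i = j.

Lemma In_mem (T : eqType) (x : T) (s : seq T) : x \in s -> List.In x s.
Proof. by elim: s => //= y s IH; rewrite inE => /orP [/eqP ->|/IH]; [left|right]. Qed.

Lemma In_enum (T : finType) (x : T) : List.In x (enum T).
Proof. by apply: In_mem; rewrite mem_enum. Qed.

Lemma In_seq1 (T : Type) (x y : T) : List.In x [:: y] <-> y = x.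
Proof. by split=> [[->|[]]|->] //; left. Qed.

Lemma enum_perm n (l : seq 'I_n) :
  uniq l -> (forall i, i \in l) -> exists q : {perm 'I_n}, l = [seq q i | i <- enum 'I_n].
Proof.
move=> Hu Hc.
have Hsize : size l == n.
  have /perm_size : perm_eq l (enum 'I_n).
    by apply: uniq_perm (enum_uniq _) _ => // i; rewrite Hc mem_enum.
  by rewrite size_enum_ord => ->.
pose t : n.-tuple 'I_n := Tuple Hsize.
have t_inj : injective (tnth t).
  move=> i j; rewrite !(tnth_nth i) /= => E; apply: ord_inj; apply/eqP.
  by rewrite -(nth_uniq i _ _ Hu) ?(eqP Hsize) ?ltn_ord // E.
exists (perm t_inj); rewrite -[LHS](map_tnth_enum t).
by apply: eq_map => i; rewrite permE.
Qed.

Section TableAutomaton.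
Variables (k : nat) (L : finType) (init : L) (acc : pred L).
Variable tr : L -> seq (constr k * L).
Hypothesis tr_wf : forall l c l', List.In (c, l') (tr l) -> edge_constr_wf c.

(* Semantics of the transition table [tr] over the alphabet {tt}: states pair
   a location of [L] with a valuation, and a word is just its data sequence. *)
Definition tstate : Type := (L * valuation k)%type.

Definition tstart : tstate := (init, [ffun _ => None]).

Definition tstep (s : tstate) (d : nat) (s' : tstate) : Prop :=
  exists c, List.In (c, s'.1) (tr s.1) /\ sat c s.2 d s'.2.

Lemma tstep_single l c l1 u d l' v :
  tr l = [:: (c, l1)] -> tstep (l, u) d (l', v) <-> l' = l1 /\ sat c u d v.
Proof.
rewrite /tstep /= => ->; split=> [[c' [/In_seq1 [<- <-] H]]|[-> H]] //.
by exists c; split=> //; apply/In_seq1.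
Qed.

Fixpoint trun (s : tstate) (ds : seq nat) (rho : seq tstate) : Prop :=
  match ds, rho with
  | [::], [::] => True
  | d :: ds', s' :: rho' => tstep s d s' /\ trun s' ds' rho'
  | _, _ => False
  end.

Definition taccepting (s : tstate) (ds : seq nat) (rho : seq tstate) : Prop :=
  trun s ds rho /\ acc (last s rho).1.

Lemma taccepting_cons s d ds s1 rho :
  tstep s d s1 -> taccepting s1 ds rho -> taccepting s (d :: ds) (s1 :: rho).
Proof. by move=> H [H1 H2]. Qed.

Lemma trun_cat s ds1 ds2 rho1 rho2 :
  trun s ds1 rho1 -> taccepting (last s rho1) ds2 rho2 ->
  taccepting s (ds1 ++ ds2) (rho1 ++ rho2).
Proof.
elim: ds1 s rho1 => [|d ds1 IH] s [|s1 rho1] //= [H1 H2] /(IH _ _ H2) [H3 H4].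
by split; [split|].
Qed.

Lemma trun_invariant (Good : tstate -> Prop) s ds rho :
  (forall s d s', Good s -> tstep s d s' -> Good s') ->
  Good s -> trun s ds rho -> Good (last s rho).
Proof.
move=> Hstep; elim: ds s rho => [|d ds IH] s [|s1 rho] //= Hs [H1 H2].
exact: IH (Hstep _ _ _ Hs H1) H2.
Qed.

Definition table_edges : seq ('I_#|L| * unit * constr k * 'I_#|L|) :=
  List.flat_map
    (fun l => List.map (fun cl => (enum_rank l, tt, cl.1, enum_rank cl.2)) (tr l))
    (enum L).

Lemma table_edgesP a c b :
  List.In (a, tt, c, b) table_edges <-> List.In (c, enum_val b) (tr (enum_val a)).
Proof.
split.
  move/List.in_flat_map => [l [_ /List.in_map_iff [[c' l'] [[<- <- <-] Hin]]]].
  by rewrite !enum_rankK.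
move=> H; apply/List.in_flat_map; exists (enum_val a); split; first exact: In_enum.
by apply/List.in_map_iff; exists (c, enum_val b); rewrite /= !enum_valK.
Qed.

Lemma table_edges_wf a x c b : List.In (a, x, c, b) table_edges -> edge_constr_wf c.
Proof. by case: x => /table_edgesP; apply: tr_wf. Qed.

Definition table_ra : RA k unit #|L| :=
  MkRA (enum_rank init) (fun i => acc (enum_val i)) table_edges_wf.

Definition val_state (s : state k #|L|) : tstate := (enum_val s.1, s.2).
Definition rank_state (s : tstate) : state k #|L| := (enum_rank s.1, s.2).

Lemma rank_stateK : cancel rank_state val_state.
Proof. by case=> l u; rewrite /val_state /= enum_rankK. Qed.

Lemma val_stateK : cancel val_state rank_state.
Proof. by case=> l u; rewrite /rank_state /= enum_valK. Qed.

Lemma table_start : val_state (init_state table_ra) = tstart.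
Proof. by rewrite /val_state /= enum_rankK. Qed.

Lemma table_step s x s' : step table_ra s x s' <-> tstep (val_state s) x.2 (val_state s').
Proof.
case: x => [[] d]; split=> [[c [/table_edgesP H1 H2]]|[c [H1 H2]]]; exists c => //.
by split=> //; apply/table_edgesP.
Qed.

Lemma table_run w s rho :
  run_from table_ra s w rho <-> trun (val_state s) (map snd w) (map val_state rho).
Proof. by elim: w s rho => [|x w IH] s [|s1 rho] //=; rewrite table_step IH. Qed.

Lemma table_accepting w s rho :
  accepting_run table_ra s w rho <->
  taccepting (val_state s) (map snd w) (map val_state rho).
Proof. by rewrite /accepting_run /taccepting table_run last_map. Qed.

Lemma map_snd_pair (ds : seq nat) : map snd (map (pair tt) ds) = ds.
Proof. by elim: ds => //= d ds ->. Qed.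

Lemma table_accepts s ds rho :
  taccepting (val_state s) ds rho ->
  accepting_run table_ra s (map (pair tt) ds) (map rank_state rho).
Proof.
by move=> H; apply/table_accepting; rewrite map_snd_pair -map_comp (eq_map rank_stateK) map_id.
Qed.

Lemma table_universal :
  (forall ds, exists rho, taccepting tstart ds rho) -> universal table_ra.
Proof.
move=> H w; have [rho Hr] := H (map snd w).
have -> : w = map (pair tt) (map snd w) by elim: w {Hr} => //= [[[] d] w] <-.
by exists (map rank_state rho); apply: table_accepts; rewrite table_start.
Qed.

Lemma table_unambiguous :
  (forall ds rho1 rho2, taccepting tstart ds rho1 -> taccepting tstart ds rho2 -> rho1 = rho2) ->
  unambiguous table_ra.
Proof.
move=> H w rho1 rho2 /table_accepting H1 /table_accepting H2.
rewrite table_start in H1 H2.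
exact: (inj_map (can_inj val_stateK)) (H _ _ _ H1 H2).
Qed.

Lemma table_clean (Good : tstate -> Prop) :
  Good tstart -> (forall s d s', Good s -> tstep s d s' -> Good s') ->
  (forall s, Good s -> exists ds rho, taccepting s ds rho) ->
  (forall s, Good s -> inj_val s.2) ->
  clean table_ra.
Proof.
move=> Hstart Hstep Hacc Hinj s [w [rho [/table_run Hr Hlast]]].
have HG : Good (val_state s).
  rewrite -Hlast -last_map; apply: (trun_invariant Hstep _ Hr).
  by rewrite table_start.
split.
  have [ds [rhoL H]] := Hacc _ HG.
  by exists (map (pair tt) ds), (map rank_state rhoL); apply: table_accepts.
move=> i j d /eqP Hij Hi Hj; apply: Hij; exact: Hinj _ HG i j d Hi Hj.
Qed.

Lemma table_in_conf ds rho :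
  trun tstart ds rho ->
  in_conf table_ra (map (pair tt) ds) (rank_state (last tstart rho)).
Proof.
move=> H; exists (map rank_state rho); split.
  by apply/table_run; rewrite table_start map_snd_pair -map_comp (eq_map rank_stateK) map_id.
by rewrite -(val_stateK (init_state _)) table_start last_map.
Qed.

End TableAutomaton.

Section Constraints.
Variable k : nat.

Lemma sat_CAnd (c1 c2 : constr k) u d v :
  sat (CAnd c1 c2) u d v <-> sat c1 u d v /\ sat c2 u d v.
Proof. by []. Qed.

Definition conj_over (a : 'I_k -> constr k) (P : pred 'I_k) : constr k :=
  List.fold_right (fun i c => CAnd (a i) c) (@CTrue k) [seq i <- enum 'I_k | P i].

Lemma sat_conj_over a (P : pred 'I_k) u d v :
  sat (conj_over a P) u d v <-> forall i, P i -> sat (a i) u d v.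
Proof.
have sat_fold s : sat (List.fold_right (fun i c => CAnd (a i) c) (@CTrue k) s) u d v <->
                  forall i, i \in s -> sat (a i) u d v.
  elim: s => [|j s IH] /=; first by split.
  rewrite IH; split=> [[Hj Hs] i|H]; last by split=> [|i Hi]; apply: H; rewrite inE ?eqxx ?Hi ?orbT.
  by rewrite inE => /orP [/eqP ->|/Hs].
rewrite sat_fold; split=> H i Hi; apply: H; first by rewrite mem_filter Hi mem_enum.
by move: Hi; rewrite mem_filter => /andP [].
Qed.

Lemma has_conjunct_conj_over a (P : pred 'I_k) i : P i -> has_conjunct (conj_over a P) (a i).
Proof.
rewrite /conj_over => Hi; have : i \in [seq j <- enum 'I_k | P j] by rewrite mem_filter Hi mem_enum.
elim: [seq j <- _ | _] => [//|j s IH]; rewrite inE => /orP [/eqP <-|/IH H] /=; right.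
  by left; case: (a i) => *; left.
by right.
Qed.

Definition assign (f : pred 'I_k) : constr k :=
  conj_over (fun i => if f i then CAtom (Tnext i) (@Tdat k) else CAtom (Tnext i) (Tcur i)) predT.

Lemma sat_assign f u d v :
  sat (assign f) u d v <-> v = [ffun i => if f i then Some d else u i].
Proof.
rewrite sat_conj_over; split=> [H|-> i _]; last by case E: (f i); rewrite /= ffunE E.
by apply/ffunP => i; rewrite ffunE; have := H i isT; case: (f i).
Qed.

(* Every table edge constraint will have the shape [CAnd (assign f) g]. *)
Lemma assign_wf f g : edge_constr_wf (CAnd (assign f) g).
Proof.
move=> r; have H := has_conjunct_conj_over
  (fun i => if f i then CAtom (Tnext i) (@Tdat k) else CAtom (Tnext i) (Tcur i)) (isT : predT r).
by case: (f r) H => H; [right; right; left|left]; right; left.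
Qed.

Definition keep_all : constr k := assign pred0.

Lemma sat_keep_all u d v : sat keep_all u d v <-> v = u.
Proof. by rewrite sat_assign; split=> ->; apply/ffunP => i; rewrite ffunE. Qed.

Definition fresh_for (P : pred 'I_k) : constr k :=
  conj_over (fun i => CNot (CAtom (@Tdat k) (Tcur i))) P.

Lemma sat_fresh_for (P : pred 'I_k) u d v :
  sat (fresh_for P) u d v <-> forall i, P i -> u i <> Some d.
Proof. by rewrite sat_conj_over; split=> H i Hi E; apply: (H i Hi); apply: esym. Qed.

Definition fresh (u : valuation k) (d : nat) : Prop := forall i, u i <> Some d.

Lemma sat_fresh u d v : sat (fresh_for predT) u d v <-> fresh u d.
Proof. by rewrite sat_fresh_for; split=> H i //; apply: H. Qed.

Definition equals_reg (j : 'I_k) : constr k := CAtom (@Tdat k) (Tcur j).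

Definition upd (u : valuation k) (r : 'I_k) (d : nat) : valuation k :=
  [ffun i => if i == r then Some d else u i].

Lemma inj_upd u r d : inj_val u -> fresh u d -> inj_val (upd u r d).
Proof.
move=> Hi Hf i j e; rewrite !ffunE.
case: (eqVneq i r) => [->|Hir]; case: (eqVneq j r) => [->|Hjr] //.
- by move=> [<-] E; case: (Hf j).
- by move=> E [Ed]; rewrite -Ed in E; case: (Hf i).
- exact: Hi.
Qed.

End Constraints.

Section PermutationURA.
Variable k' : nat.
Local Notation K := k'.+1.

(* Locations: the initial [Start]; the permutation branch, which stores the
   first K data in [PStore q t] and then checks the registers in order in
   [PCheck j]; the complement branch, which stores the first K data in
   [CStore t] and then tracks in [CMatch X] the registers already matched;
   and the sink [Sink], accepting every continuation. *)
Inductive loc :=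
| Start
| PStore of {perm 'I_K} & 'I_K
| PCheck of 'I_K
| CStore of 'I_K
| CMatch of {set 'I_K}
| Sink.

Definition loc_code : Type :=
  (unit + ({perm 'I_K} * 'I_K) + 'I_K + 'I_K + {set 'I_K} + unit)%type.

Definition encode_loc (l : loc) : loc_code :=
  match l with
  | Start => inl (inl (inl (inl (inl tt))))
  | PStore q t => inl (inl (inl (inl (inr (q, t)))))
  | PCheck j => inl (inl (inl (inr j)))
  | CStore t => inl (inl (inr t))
  | CMatch X => inl (inr X)
  | Sink => inr tt
  end.

Definition decode_loc (c : loc_code) : loc :=
  match c with
  | inl (inl (inl (inl (inl _)))) => Start
  | inl (inl (inl (inl (inr (q, t))))) => PStore q t
  | inl (inl (inl (inr j))) => PCheck j
  | inl (inl (inr t)) => CStore t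
  | inl (inr X) => CMatch X
  | inr _ => Sink
  end.

Lemma encode_locK : cancel encode_loc decode_loc. Proof. by case. Qed.

HB.instance Definition _ := Finite.copy loc (can_type encode_locK).

Lemma inord0 : inord 0 = ord0 :> 'I_K.
Proof. by apply: val_inj; rewrite /= inordK. Qed.

Definition pcheck_loc (n : nat) : loc := if n < K then PCheck (inord n) else Sink.
Definition pstore_loc (q : {perm 'I_K}) (n : nat) : loc :=
  if n < K then PStore q (inord n) else pcheck_loc 0.
Definition cstore_loc (n : nat) : loc := if n < K then CStore (inord n) else CMatch set0.

Definition pstore_tr (q : {perm 'I_K}) (t : 'I_K) : seq (constr K * loc) :=
  [:: (CAnd (assign (pred1 (q^-1 t)%g)) (fresh_for predT), pstore_loc q t.+1)].

Definition cstore_tr (t : 'I_K) : seq (constr K * loc) :=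
  [:: (CAnd (assign (pred1 t)) (fresh_for predT), cstore_loc t.+1);
      (CAnd (keep_all K) (CNot (fresh_for predT)), Sink)].

(* In [CMatch X], register [i] may be matched next unless this would complete
   the matching of all registers, which is exactly what the permutation
   branches accept. *)
Definition match_next (X : {set 'I_K}) (i : 'I_K) : bool :=
  (i \notin X) && (X :|: [set i] != setT).

Definition tr (l : loc) : seq (constr K * loc) :=
  match l with
  | Start => cstore_tr ord0 ++ List.flat_map (fun q => pstore_tr q ord0) (enum {perm 'I_K})
  | PStore q t => pstore_tr q t
  | PCheck j => [:: (CAnd (keep_all K) (equals_reg j), pcheck_loc j.+1)]
  | CStore t => cstore_tr t
  | CMatch X =>
      List.map (fun i => (CAnd (keep_all K) (equals_reg i), CMatch (X :|: [set i])))
               (List.filter (match_next X) (enum 'I_K))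
      ++ [:: (CAnd (keep_all K) (fresh_for (fun i => i \notin X)), Sink)]
  | Sink => [:: (CAnd (keep_all K) (@CTrue K), Sink)]
  end.

Definition accepting (l : loc) : bool :=
  match l with PStore _ _ | PCheck _ => false | _ => true end.

Lemma tr_wf l c l' : List.In (c, l') (tr l) -> edge_constr_wf c.
Proof.
have single c1 l1 : List.In (c, l') [:: (c1, l1)] -> c = c1 by move=> /In_seq1 [].
have Hcstore t : List.In (c, l') (cstore_tr t) -> edge_constr_wf c.
  by move=> [[<- _]|[[<- _]|[]]]; apply: assign_wf.
case: l => [|q t|j|t|X|].
- move=> Hin; case: (List.in_app_or (cstore_tr ord0) _ _ Hin) => [/Hcstore //|].
  by move/List.in_flat_map => [q [_ /single ->]]; apply: assign_wf.
- by move/single ->; apply: assign_wf.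
- by move/single ->; apply: assign_wf.
- exact: Hcstore.
- move=> Hin; case: (List.in_app_or _ _ _ Hin).
    by move/List.in_map_iff => [i [[<- _] _]]; apply: assign_wf.
  by move/single ->; apply: assign_wf.
- by move/single ->; apply: assign_wf.
Qed.

Local Notation state := (tstate K loc).
Local Notation step := (tstep tr).
Local Notation run := (trun tr).
Local Notation accepts := (taccepting accepting tr).

Lemma step_pstore q t u d l' v :
  step (PStore q t, u) d (l', v) <->
  fresh u d /\ l' = pstore_loc q t.+1 /\ v = upd u (q^-1 t)%g d.
Proof.
rewrite tstep_single // sat_CAnd sat_assign sat_fresh.
by split=> [[-> [-> H]]|[H [-> ->]]].
Qed.

Lemma step_pcheck j u d l' v :
  step (PCheck j, u) d (l', v) <-> Some d = u j /\ l' = pcheck_loc j.+1 /\ v = u.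
Proof.
rewrite tstep_single // sat_CAnd sat_keep_all.
by split=> [[-> [-> H]]|[H [-> ->]]].
Qed.

Lemma step_sink u d l' v : step (Sink, u) d (l', v) <-> l' = Sink /\ v = u.
Proof. by rewrite tstep_single // sat_CAnd sat_keep_all; split=> [[-> [-> _]]|[-> ->]]. Qed.

Lemma step_cstore t u d l' v :
  step (CStore t, u) d (l', v) <->
  (fresh u d /\ l' = cstore_loc t.+1 /\ v = upd u t d) \/ (~ fresh u d /\ l' = Sink /\ v = u).
Proof.
rewrite /tstep /=; split.
  move=> [c [[[<- <-]|[[<- <-]|[]]] /= [Hv Hd]]].
    by move/sat_assign: Hv => ->; move/sat_fresh: Hd; left.
  by move/sat_keep_all: Hv => ->; right; split=> // /sat_fresh.
move=> [[Hd [-> ->]]|[Hd [-> ->]]]; eexists; split.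
- by left.
- by split; [apply/sat_assign|apply/sat_fresh].
- by right; left.
- by split; [apply/sat_keep_all|move=> /sat_fresh].
Qed.

Lemma step_cmatch X u d l' v :
  step (CMatch X, u) d (l', v) <->
  (exists i, match_next X i /\ Some d = u i /\ l' = CMatch (X :|: [set i]) /\ v = u)
  \/ ((forall i, i \notin X -> u i <> Some d) /\ l' = Sink /\ v = u).
Proof.
rewrite /tstep /=; split.
  move=> [c [Hin0 Hs]]; case: (List.in_app_or _ _ _ Hin0) => Hin.
    move: Hin Hs => /List.in_map_iff [i [[<- <-] /List.filter_In [_ Hi]]].
    by move=> [/sat_keep_all -> Hd]; left; exists i.
  by move: Hin Hs => /In_seq1 [<- <-] [/sat_keep_all -> /sat_fresh_for Hd]; right.
move=> [[i [Hi [Hd [-> ->]]]]|[Hd [-> ->]]]; eexists; split.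
- apply: List.in_or_app; left; apply/List.in_map_iff; exists i; split=> //.
  by apply/List.filter_In; split; first exact: In_enum.
- by split; first apply/sat_keep_all.
- by apply: List.in_or_app; right; left.
- by split; [apply/sat_keep_all|apply/sat_fresh_for].
Qed.

Lemma step_start u d s' :
  step (Start, u) d s' <->
  step (CStore ord0, u) d s' \/ exists q, step (PStore q ord0, u) d s'.
Proof.
rewrite /tstep; split.
  move=> [c [Hin0 Hs]]; case: (List.in_app_or (cstore_tr ord0) _ _ Hin0) => Hin.
    by left; exists c.
  by move/List.in_flat_map: Hin => [q [_ Hin]]; right; exists q, c.
move=> [[c [Hin Hs]]|[q [c [Hin Hs]]]]; exists c; split=> //.
all: apply: (List.in_or_app (cstore_tr ord0)).
  by left.
by right; apply/List.in_flat_map; exists q; split; first exact: In_enum.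
Qed.

(* The valuation of a branch that has stored the data [D]: register [r]
   holds the [(q r)]-th datum.  The complement branch uses [q = 1]. *)
Definition regval (q : {perm 'I_K}) (D : seq nat) : valuation K :=
  [ffun r => if q r < size D then Some (nth 0 D (q r)) else None].

Definition readout (q : {perm 'I_K}) (D : seq nat) : seq nat :=
  [seq nth 0 D (q r) | r <- enum 'I_K].

Lemma size_readout q D : size (readout q D) = K.
Proof. by rewrite size_map size_enum_ord. Qed.

Lemma regval_nil q : regval q [::] = [ffun _ => None].
Proof. by apply/ffunP => r; rewrite !ffunE. Qed.

Lemma regval_full q D r : size D = K -> regval q D r = Some (nth 0 D (q r)).
Proof. by move=> HD; rewrite ffunE HD ltn_ord. Qed.

Lemma regval_readout q D j :
  size D = K -> j < K -> regval q D (inord j) = Some (nth 0 (readout q D) j).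
Proof.
move=> HD Hj; rewrite regval_full // (nth_map ord0) ?size_enum_ord //.
by congr (Some (nth 0 D (q _))); apply: val_inj; rewrite /= nth_enum_ord // inordK.
Qed.

Lemma regval_fresh q D d : size D <= K -> fresh (regval q D) d <-> d \notin D.
Proof.
move=> HD; split=> [Hf|/negP Hd r].
  apply/negP => Hd; have Hi : index d D < size D by rewrite index_mem.
  apply: (Hf (q^-1 (inord (index d D)))%g).
  by rewrite ffunE permKV inordK ?Hi ?nth_index // (leq_trans Hi).
by rewrite ffunE; case: ifP => // Hr [E]; apply: Hd; rewrite -E mem_nth.
Qed.

Lemma regval_rcons q D d :
  size D < K -> upd (regval q D) (q^-1 (inord (size D)))%g d = regval q (rcons D d).
Proof.
move=> HD; apply/ffunP => r; rewrite !ffunE size_rcons ltnS.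
have [->|Hne] := eqVneq r (q^-1 (inord (size D)))%g.
  by rewrite permKV inordK // leqnn nth_rcons ltnn eqxx.
have Hqr : (q r : nat) != size D.
  apply: contra Hne => /eqP E; apply/eqP.
  rewrite -[r in LHS](permK q) (_ : q r = inord (size D)) //.
  by apply: val_inj; rewrite /= inordK // E.
by rewrite [q r <= size D]leq_eqVlt (negbTE Hqr) /= nth_rcons; case: ifP.
Qed.

Lemma regval_inj q D : uniq D -> inj_val (regval q D).
Proof.
move=> Hu i j d; rewrite !ffunE; case: ifP => // Hi [Ei]; case: ifP => // Hj [Ej].
apply: (perm_inj (s := q)); apply: val_inj; apply/eqP.
by rewrite -(nth_uniq 0 Hi Hj Hu) Ei Ej.
Qed.

Definition sP (q : {perm 'I_K}) (D : seq nat) : state := (pstore_loc q (size D), regval q D).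
Definition sC (D : seq nat) : state := (cstore_loc (size D), regval 1 D).
Definition sK (v : valuation K) (j : nat) : state := (pcheck_loc j, v).

Lemma sP_full q D : size D = K -> sP q D = sK (regval q D) 0.
Proof. by move=> HD; rewrite /sP /pstore_loc HD ltnn. Qed.

Lemma sC_full D : size D = K -> sC D = (CMatch set0, regval 1 D).
Proof. by move=> HD; rewrite /sC /cstore_loc HD ltnn. Qed.

Lemma sK_done v : sK v K = (Sink, v).
Proof. by rewrite /sK /pcheck_loc ltnn. Qed.

Lemma step_sP q D d s' :
  size D < K -> step (sP q D) d s' <-> d \notin D /\ s' = sP q (rcons D d).
Proof.
move=> HD; case: s' => l' v.
rewrite /sP {1}/pstore_loc HD step_pstore inordK // regval_rcons // (regval_fresh _ _ (ltnW HD)).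
by rewrite size_rcons; split=> [[H [-> ->]]|[H [-> ->]]].
Qed.

Lemma step_sC D d s' :
  size D < K ->
  step (sC D) d s' <->
  (d \notin D /\ s' = sC (rcons D d)) \/ (d \in D /\ s' = (Sink, regval 1 D)).
Proof.
move=> HD; case: s' => l' v.
have Hupd := regval_rcons 1 d HD; rewrite invg1 perm1 in Hupd.
have Hf := regval_fresh 1 d (ltnW HD).
rewrite /sC {1}/cstore_loc HD step_cstore inordK // Hupd size_rcons Hf.
split; case=> [[H [-> ->]]|[H [-> ->]]]; [by left|right|by left|right]; split=> //.
  by move/negP: H; rewrite negbK.
by rewrite H.
Qed.

Lemma step_sK v j d s' :
  j < K -> step (sK v j) d s' <-> Some d = v (inord j) /\ s' = sK v j.+1.
Proof.
move=> Hj; case: s' => l' v'; rewrite /sK {1}/pcheck_loc Hj step_pcheck inordK //.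
by split=> [[H [-> ->]]|[H [-> ->]]].
Qed.

Definition start : state := tstart K Start.

Lemma step_sI d s' : step start d s' <-> s' = sC [:: d] \/ exists q, s' = sP q [:: d].
Proof.
have HC : (CStore ord0, [ffun _ => None]) = sC [::] by rewrite /sC regval_nil /cstore_loc inord0.
have HP q : (PStore q ord0, [ffun _ => None]) = sP q [::].
  by rewrite /sP regval_nil /pstore_loc inord0.
rewrite step_start HC; split.
  case=> [|[q]]; first by rewrite step_sC // => -[[_ ->]|[]]; left.
  by rewrite HP step_sP // => -[_ ->]; right; exists q.
case=> [->|[q ->]]; first by left; apply/step_sC => //; left.
by right; exists q; rewrite HP; apply/step_sP.
Qed.

Lemma sink_accepts v ds : exists rho, accepts (Sink, v) ds rho.
Proof.
elim: ds => [|d ds [rho H]]; first by exists [::].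
by exists ((Sink, v) :: rho); apply: taccepting_cons => //; apply/step_sink.
Qed.

Lemma check_accepts q D j rest :
  size D = K -> j <= K ->
  exists rho, accepts (sK (regval q D) j) (drop j (readout q D) ++ rest) rho.
Proof.
move=> HD; move Em: (K - j) => m; elim: m j Em => [|m IH] j Em Hj.
  have -> : j = K by apply/eqP; rewrite eqn_leq Hj -subn_eq0 Em.
  by rewrite drop_oversize ?size_readout // sK_done; apply: sink_accepts.
have Hjk : j < K by rewrite -subn_gt0 Em.
have Em' : K - j.+1 = m by rewrite subnS Em.
have [rho Hr] := IH j.+1 Em' Hjk.
exists (sK (regval q D) j.+1 :: rho).
rewrite (drop_nth 0) ?size_readout //; apply: taccepting_cons => //.
by apply/step_sK => //; rewrite regval_readout.
Qed.

Lemma check_accepted q D j ds rho :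
  size D = K -> j <= K -> accepts (sK (regval q D) j) ds rho ->
  exists rest, ds = drop j (readout q D) ++ rest.
Proof.
move=> HD; elim: ds j rho => [|d ds IH] j rho Hj [Hr Ha].
  case: rho Hr Ha => [|//] _; rewrite /= /pcheck_loc; case: ifP => // Hjk _.
  by exists [::]; rewrite drop_oversize // size_readout leqNgt Hjk.
have [Hjk|HKj] := ltnP j K; last by exists (d :: ds); rewrite drop_oversize ?size_readout.
case: rho Hr Ha => [//|s1 rho] /= [/(step_sK _ _ _ Hjk) [Hd ->] Hr] Ha.
have [rest ->] := IH j.+1 rho Hjk (conj Hr Ha).
exists rest; rewrite [drop j _](drop_nth 0) ?size_readout //=; congr (_ :: _).
by move: Hd; rewrite regval_readout // => -[].
Qed.

Lemma pstore_run q D0 D1 :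
  uniq (D0 ++ D1) -> size (D0 ++ D1) <= K ->
  exists rho, run (sP q D0) D1 rho /\ last (sP q D0) rho = sP q (D0 ++ D1).
Proof.
elim: D1 D0 => [|d D1 IH] D0 Hu Hs; first by exists [::]; rewrite cats0.
rewrite -cat_rcons in Hu Hs *.
have Hlt : size D0 < K by apply: leq_trans Hs; rewrite size_cat size_rcons leq_addr.
have Hd : d \notin D0 by move: Hu; rewrite cat_uniq rcons_uniq => /andP [/andP []].
have [rho [Hr Hl]] := IH _ Hu Hs.
by exists (sP q (rcons D0 d) :: rho); split=> //; split=> //; apply/step_sP.
Qed.

Lemma pbranch_accepts q D0 D1 rest :
  uniq (D0 ++ D1) -> size (D0 ++ D1) = K ->
  exists rho, accepts (sP q D0) (D1 ++ readout q (D0 ++ D1) ++ rest) rho.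
Proof.
move=> Hu Hs; have [rho1 [Hr1 Hl1]] := pstore_run q Hu (eq_leq Hs).
have [rho2 Hr2] := check_accepts q rest Hs (leq0n K).
exists (rho1 ++ rho2); apply: trun_cat Hr1 _.
by rewrite Hl1 sP_full //; rewrite drop0 in Hr2.
Qed.

Lemma pbranch_accepted q D0 ds rho :
  uniq D0 -> size D0 <= K -> accepts (sP q D0) ds rho ->
  exists D1 rest,
    [/\ uniq (D0 ++ D1), size (D0 ++ D1) = K & ds = D1 ++ readout q (D0 ++ D1) ++ rest].
Proof.
have full D ds' rho' : uniq D -> size D = K -> accepts (sP q D) ds' rho' ->
    exists D1 rest,
      [/\ uniq (D ++ D1), size (D ++ D1) = K & ds' = D1 ++ readout q (D ++ D1) ++ rest].
  move=> Hu HD; rewrite sP_full // => Hacc.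
  have [rest ->] := check_accepted HD (leq0n K) Hacc.
  by exists [::], rest; rewrite cats0 drop0.
elim: ds D0 rho => [|d ds IH] D0 rho Hu Hs Hacc;
  have [Hlt|Hge] := ltnP (size D0) K; try by apply: (full _ _ _ Hu _ Hacc); apply/eqP;
  rewrite eqn_leq Hs.
  by case: Hacc; case: rho => [|//] _; rewrite /= /pstore_loc Hlt.
case: Hacc; case: rho => [//|s1 rho] /= [/(step_sP _ _ _ Hlt) [Hd ->] Hr] Ha.
have Hu' : uniq (rcons D0 d) by rewrite rcons_uniq Hd Hu.
have Hs' : size (rcons D0 d) <= K by rewrite size_rcons.
have [D1 [rest [Hu1 Hs1 ->]]] := IH _ _ Hu' Hs' (conj Hr Ha).
by exists (d :: D1), rest; rewrite -cat_rcons.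
Qed.

Definition perm_shaped (q : {perm 'I_K}) (ds : seq nat) : Prop :=
  exists D rest, [/\ uniq D, size D = K & ds = D ++ readout q D ++ rest].

(* Distinct permutations have disjoint shapes, since the stored data are distinct. *)
Lemma perm_shaped_unique q1 q2 ds : perm_shaped q1 ds -> perm_shaped q2 ds -> q1 = q2.
Proof.
move=> [D [r1 [Hu HD ->]]] [D2 [r2 [_ HD2 /eqP]]].
rewrite eqseq_cat ?HD ?HD2 // => /andP [/eqP ED]; subst D2.
rewrite eqseq_cat ?size_readout // => /andP [/eqP /eq_in_map Hr _].
apply/permP => r; apply: val_inj; apply/eqP.
by have := Hr r (mem_enum _ r); move=> /= /eqP; rewrite nth_uniq ?HD ?ltn_ord.
Qed.

Lemma pbranch_shaped q d ds rho : accepts (sP q [:: d]) ds rho -> perm_shaped q (d :: ds).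
Proof. by move=> /pbranch_accepted [] // D1 [rest [Hu Hs ->]]; exists (d :: D1), rest. Qed.

Lemma sink_runs v ds : exists rho, run (Sink, v) ds rho.
Proof. by have [rho [Hr _]] := sink_accepts v ds; exists rho. Qed.

(* In [CMatch X] with register contents [f], the automaton dies exactly on
   the words starting with the contents of the registers outside [X] in some
   order: each step matches one more register, and the transition that would
   complete the matching is missing. *)
Lemma match_dies (X : {set 'I_K}) v (f : 'I_K -> nat) (l : seq 'I_K) rest rho :
  inj_val v -> (forall i, v i = Some (f i)) ->
  uniq l -> (forall i, (i \in l) = (i \notin X)) -> l != [::] ->
  ~ run (CMatch X, v) (map f l ++ rest) rho.
Proof.
move=> Hinj Hv; elim: l X rho => [//|i l IH] X rho /= /andP [Hil Hu] Hl _.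
have HiX : i \notin X by rewrite -Hl mem_head.
case: rho => [//|s1 rho] [/(@step_cmatch _ _ _ s1.1 s1.2) H Hr].
case: H => [[i0 [/andP [Hi0 Hfull] [Hd [E1 E2]]]]|[Hfresh _]]; last first.
  by apply: (Hfresh i HiX); apply: Hv.
have Ei : i0 = i by apply: (Hinj i0 i (f i)); rewrite -?Hd.
subst i0.
move: Hr Hfull; case: s1 E1 E2 => /= _ _ -> -> Hr Hfull.
have HlX j : (j \in l) = (j \notin X :|: [set i]).
  rewrite in_setU in_set1 negb_or -Hl inE.
  by case: (eqVneq j i) => [->|_] /=; [apply: negbTE|rewrite andbT].
case: l IH Hu HlX Hr {Hil Hl} => [|j l] IH Hu HlX Hr.
  move/negP: Hfull; apply; apply/eqP/setP => j.
  by have := HlX j; rewrite in_setT in_nil => /esym /negbFE.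
exact: IH _ _ Hu HlX isT Hr.
Qed.

Lemma match_run_or_shape (X : {set 'I_K}) v (f : 'I_K -> nat) ds :
  inj_val v -> (forall i, v i = Some (f i)) ->
  (exists rho, run (CMatch X, v) ds rho) \/
  exists l rest, [/\ uniq l, forall i, (i \in l) = (i \notin X) & ds = map f l ++ rest].
Proof.
move=> Hinj Hv; elim: ds X => [|x ds IH] X; first by left; exists [::].
case: (pickP (fun i => (i \notin X) && (f i == x))) => [i /andP [HiX /eqP Hfi]|Hno]; last first.
  left; have [rho Hr] := sink_runs v ds; exists ((Sink, v) :: rho); split=> //.
  apply/step_cmatch; right; split=> // i HiX; rewrite Hv => -[E].
  by have := Hno i; rewrite HiX E eqxx.
have HX j : (j \notin X :|: [set i]) = (j \notin X) && (j != i).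
  by rewrite in_setU in_set1 negb_or.
case: (eqVneq (X :|: [set i]) setT) => Hfull.
  right; exists [:: i], ds; split=> //=; last by rewrite Hfi.
  move=> j; rewrite inE; have := HX j; rewrite Hfull in_setT /= => /esym/nandP.
  by case: (eqVneq j i) => [->|_] //= [/negbNE ->|].
case: (IH (X :|: [set i])) => [[rho Hr]|[l [rest [Hu Hl ->]]]].
  left; exists ((CMatch (X :|: [set i]), v) :: rho); split=> //.
  by apply/step_cmatch; left; exists i; rewrite /match_next HiX Hfull Hv Hfi.
right; exists (i :: l), rest; split; last by rewrite /= Hfi.
  by rewrite /= Hu Hl HX eqxx andbF.
by move=> j; rewrite inE Hl HX; case: (eqVneq j i) => [->|_] /=; rewrite ?andbT.
Qed.

(* The complement branch runs on every word that is not of permutation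
   shape (a repeated datum among the first K leads to the sink). *)
Lemma cbranch_run_or_shaped D0 ds :
  uniq D0 -> size D0 <= K ->
  (exists rho, run (sC D0) ds rho) \/
  exists D1 q rest,
    [/\ uniq (D0 ++ D1), size (D0 ++ D1) = K & ds = D1 ++ readout q (D0 ++ D1) ++ rest].
Proof.
elim: ds D0 => [|x ds IH] D0 Hu Hs; first by left; exists [::].
have [Hlt|Hge] := ltnP (size D0) K.
  case Hx: (x \in D0).
    left; have [rho Hr] := sink_runs (regval 1 D0) ds.
    by exists ((Sink, regval 1 D0) :: rho); split=> //; apply/step_sC => //; right.
  have Hu' : uniq (rcons D0 x) by rewrite rcons_uniq Hx Hu.
  have Hs' : size (rcons D0 x) <= K by rewrite size_rcons.
  case: (IH _ Hu' Hs') => [[rho Hr]|[D1 [q [rest [H1 H2 ->]]]]].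
    by left; exists (sC (rcons D0 x) :: rho); split=> //; apply/step_sC => //; left; rewrite Hx.
  by right; exists (x :: D1), q, rest; rewrite -cat_rcons.
have HK : size D0 = K by apply/eqP; rewrite eqn_leq Hs Hge.
have Hv i : regval 1 D0 i = Some (nth 0 D0 i) by rewrite regval_full // perm1.
rewrite sC_full //.
case: (match_run_or_shape set0 (x :: ds) (regval_inj (q := 1) Hu) Hv) => [|[l [rest [Hl Hcov E]]]].
  by left.
have Hall i : i \in l by rewrite Hcov in_set0.
have [q El] := enum_perm Hl Hall.
right; exists [::], q, rest; rewrite cats0; split=> //.
by rewrite E El -map_comp.
Qed.

Lemma cbranch_dies D0 D1 q rest rho :
  uniq (D0 ++ D1) -> size (D0 ++ D1) = K ->
  ~ run (sC D0) (D1 ++ readout q (D0 ++ D1) ++ rest) rho.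
Proof.
elim: D1 D0 rho => [|x D1 IH] D0 rho Hu Hs.
  rewrite cats0 in Hu Hs *; rewrite sC_full // /readout (map_comp (fun i : 'I_K => nth 0 D0 i)) cat0s.
  apply: (match_dies (regval_inj (q := 1) Hu)).
  - by move=> i; rewrite regval_full // perm1.
  - by rewrite map_inj_uniq ?enum_uniq //; apply: perm_inj.
  - move=> i; rewrite in_set0; apply/mapP; exists (q^-1 i)%g; last by rewrite permKV.
    exact: mem_enum.
  - by rewrite -size_eq0 size_map size_enum_ord.
have Hlt : size D0 < K by rewrite -Hs size_cat /= addnS ltnS leq_addr.
have Hx : x \notin D0 by move: Hu; rewrite cat_uniq /= => /and3P [_ /norP []].
case: rho => [//|s1 rho] [/(step_sC _ _ Hlt) [[_ Es1]|[Hx' _]] Hr]; last by rewrite Hx' in Hx.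
rewrite Es1 -cat_rcons in Hr; rewrite -cat_rcons in Hu Hs.
exact: IH _ _ Hu Hs Hr.
Qed.

Definition in_cbranch (l : loc) : bool :=
  match l with CStore _ | CMatch _ | Sink => true | _ => false end.

Lemma cbranch_closed s d s' : in_cbranch s.1 -> step s d s' -> in_cbranch s'.1.
Proof.
case: s => l u; case: s' => l' v; case: l => //= [t|X|] _.
- by case/step_cstore => [[_ [-> _]]|[_ [-> _]]] //; rewrite /cstore_loc; case: ifP.
- by case/step_cmatch => [[i [_ [_ [-> _]]]]|[_ [-> _]]].
- by case/step_sink => ->.
Qed.

Lemma cbranch_accepting s ds rho : in_cbranch s.1 -> run s ds rho -> accepting (last s rho).1.
Proof.
move=> Hs Hr; have := trun_invariant (Good := fun s => in_cbranch s.1) cbranch_closed Hs Hr.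
by case: (last s rho).1.
Qed.

Lemma cbranch_dies_shaped q d ds rho : perm_shaped q (d :: ds) -> ~ run (sC [:: d]) ds rho.
Proof. by move=> [[|d' D] [rest [Hu HD]]] // [-> ->]; apply: cbranch_dies. Qed.

Lemma locs_not_start q n :
  [/\ pcheck_loc n <> Start, pstore_loc q n <> Start & cstore_loc n <> Start].
Proof. by rewrite /pstore_loc /cstore_loc /pcheck_loc; split; do ?case: ifP. Qed.

(* Away from [Start] the automaton is deterministic on states with an
   injective valuation, since a datum then matches at most one register. *)
Lemma step_det s d s1 s2 :
  s.1 <> Start -> inj_val s.2 -> step s d s1 -> step s d s2 ->
  [/\ s1 = s2, s1.1 <> Start & inj_val s1.2].
Proof.
case: s => l u; case: s1 => l1 v1; case: s2 => l2 v2 /=.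
case: l => [//|q t|j|t|X|] _ Hi.
- move=> /step_pstore [Hf [-> ->]] /step_pstore [_ [-> ->]].
  by have [_ Hp _] := locs_not_start q t.+1; split=> //; exact: inj_upd.
- move=> /step_pcheck [_ [-> ->]] /step_pcheck [_ [-> ->]].
  by have [Hk _ _] := locs_not_start 1 j.+1.
- move=> /step_cstore [[Hf [-> ->]]|[Hf [-> ->]]]
         /step_cstore [[Hf' [-> ->]]|[Hf' [-> ->]]] //.
  by have [_ _ Hc] := locs_not_start 1 t.+1; split=> //; exact: inj_upd.
- move=> /step_cmatch [[i [Hi1 [He1 [-> ->]]]]|[Hf [-> ->]]]
         /step_cmatch [[i' [Hi1' [He1' [-> ->]]]]|[Hf' [-> ->]]] //.
  + by have <- : i = i' by apply: (Hi i i' d); rewrite -?He1 -?He1'.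
  + by case/andP: Hi1 => HiX _; case: (Hf' i HiX); rewrite -He1.
  + by case/andP: Hi1' => HiX _; case: (Hf i' HiX); rewrite -He1'.
- by move=> /step_sink [-> ->] /step_sink [-> ->].
Qed.

Lemma run_unique s ds rho1 rho2 :
  s.1 <> Start -> inj_val s.2 -> run s ds rho1 -> run s ds rho2 -> rho1 = rho2.
Proof.
elim: ds s rho1 rho2 => [|d ds IH] s [|s1 rho1] [|s2 rho2] //= Hl Hi [H1 R1] [H2 R2].
have [E Hl1 Hi1] := step_det Hl Hi H1 H2; subst s2.
by rewrite (IH s1 rho1 rho2).
Qed.

(* Every word is accepted: by a permutation branch if it has the shape of
   that branch, and by the complement branch otherwise. *)
Lemma accepts_all ds : exists rho, accepts start ds rho.
Proof.
case: ds => [|d ds]; first by exists [::].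
have HC : in_cbranch (sC [:: d]).1 by rewrite /= /cstore_loc; case: ifP.
case: (@cbranch_run_or_shaped [:: d] ds isT isT) => [[rho Hr]|[D1 [q [rest [Hu Hs E]]]]].
  exists (sC [:: d] :: rho); split; first by split=> //; apply/step_sI; left.
  exact: cbranch_accepting HC Hr.
have [rho Hr] : exists rho, accepts (sP q [:: d]) ds rho by rewrite E; apply: pbranch_accepts.
by exists (sP q [:: d] :: rho); apply: taccepting_cons Hr; apply/step_sI; right; exists q.
Qed.

(* At most one branch accepts a word, and each branch is deterministic. *)
Lemma accepts_unique ds rho1 rho2 : accepts start ds rho1 -> accepts start ds rho2 -> rho1 = rho2.
Proof.
case: ds => [|d ds].
  by case: rho1 => [|? ?] [H1 _]; case: rho2 => [|? ?] [H2 _].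
case: rho1 => [|s1 rho1] [//= [H1 R1] A1]; case: rho2 => [|s2 rho2] [//= [H2 R2] A2].
have Es : s1 = s2.
  move/step_sI: H1 => [E1|[q1 E1]]; move/step_sI: H2 => [E2|[q2 E2]]; subst s1 s2 => //.
  - by case: (cbranch_dies_shaped (pbranch_shaped (conj R2 A2)) R1).
  - by case: (cbranch_dies_shaped (pbranch_shaped (conj R1 A1)) R2).
  - by rewrite (perm_shaped_unique (pbranch_shaped (conj R1 A1)) (pbranch_shaped (conj R2 A2))).
subst s2; congr (_ :: _); apply: run_unique R1 R2.
  move/step_sI: H1 => [->|[q ->]] /=; first by have [_ _ Hc] := locs_not_start 1 1.
  by have [_ Hp _] := locs_not_start q 1.
by move/step_sI: H1 => [->|[q ->]]; apply: regval_inj.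
Qed.

Definition good (s : state) : Prop :=
  inj_val s.2 /\
  match s.1 with
  | Start => s.2 = [ffun _ => None]
  | PStore q t => exists D, [/\ uniq D, size D = t & s.2 = regval q D]
  | PCheck _ => exists q D, [/\ uniq D, size D = K & s.2 = regval q D]
  | _ => True
  end.

Lemma good_sP q D : uniq D -> size D <= K -> good (sP q D).
Proof.
move=> Hu Hs; split; first exact: regval_inj.
rewrite /sP /pstore_loc; case: ifP => [Hlt|Hge] /=; first by exists D; rewrite inordK.
rewrite /pcheck_loc /=; exists q, D; split=> //.
by apply/eqP; rewrite eqn_leq Hs leqNgt Hge.
Qed.

Lemma good_sC D : uniq D -> good (sC D).
Proof. by move=> Hu; split; [exact: regval_inj|rewrite /sC /cstore_loc; case: ifP]. Qed.

Lemma good_step s d s' : good s -> step s d s' -> good s'.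
Proof.
case: s => l u; case: s' => l' v; case: l => [|q t|j|t|X|] [Hi /= H].
- move: H => -> Hs; have /step_sI [->|[q ->]] : step start d (l', v) := Hs.
    exact: good_sC.
  exact: good_sP.
- move: H => [D [Hu Ht ->]].
  have -> : (PStore q t, regval q D) = sP q D by rewrite /sP /pstore_loc Ht ltn_ord inord_val.
  have Hlt : size D < K by rewrite Ht.
  rewrite step_sP // => -[Hd ->]; apply: good_sP; first by rewrite rcons_uniq Hd.
  by rewrite size_rcons.
- by move/step_pcheck => [_ [-> ->]]; split=> //; rewrite /pcheck_loc; case: ifP.
- case/step_cstore => [[Hf [-> ->]]|[_ [-> ->]]] //.
  by split; [exact: inj_upd|rewrite /cstore_loc; case: ifP].
- by case/step_cmatch => [[i [_ [_ [-> ->]]]]|[_ [-> ->]]].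
- by case/step_sink => -> ->.
Qed.

(* Every good state accepts some word: a permutation branch is completed
   with fresh data followed by the matching readout. *)
Lemma good_accepts s : good s -> exists ds rho, accepts s ds rho.
Proof.
case: s => [[|q t|j|t|X|] u] [_ /= H]; try by exists [::], [::].
- move: H => [D [Hu Ht ->]].
  have -> : (PStore q t, regval q D) = sP q D by rewrite /sP /pstore_loc Ht ltn_ord inord_val.
  pose D1 := iota (\max_(x <- D) x).+1 (K - size D).
  have Hu1 : uniq (D ++ D1).
    rewrite cat_uniq Hu iota_uniq andbT /=; apply/hasPn => x; rewrite mem_iota => /andP [Hx _].
    apply/negP => /(leq_bigmax_seq (F := fun x => x)) /(_ isT).
    by rewrite leqNgt Hx.
  have Hs1 : size (D ++ D1) = K by rewrite size_cat size_iota subnKC // Ht ltnW.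
  have [rho Hr] := pbranch_accepts q [::] Hu1 Hs1.
  by exists (D1 ++ readout q (D ++ D1) ++ [::]), rho.
- move: H => [q [D [Hu HD ->]]].
  have -> : (PCheck j, regval q D) = sK (regval q D) j by rewrite /sK /pcheck_loc ltn_ord inord_val.
  have [rho Hr] := check_accepts q [::] HD (ltnW (ltn_ord j)).
  by exists (drop j (readout q D) ++ [::]), rho.
Qed.

Lemma perm_branch_reached q :
  exists rho, run start (iota 0 K) rho /\ last start rho = sK (regval q (iota 0 K)) 0.
Proof.
have [rho [Hr Hl]] := @pstore_run q [:: 0] (iota 1 k') (iota_uniq 0 K) (eq_leq (size_iota 0 K)).
exists (sP q [:: 0] :: rho); split; first by split=> //; apply/step_sI; right; exists q.
by rewrite /= Hl sP_full //= size_iota.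
Qed.

Lemma regval_iota_inj : injective (fun q => regval q (iota 0 K)).
Proof.
move=> q1 q2 /ffunP E; apply/permP => r; apply: val_inj.
by have := E r; rewrite !regval_full ?size_iota // !nth_iota // => -[].
Qed.

Definition perm_ura := table_ra Start accepting tr_wf.

(* Reachable states are [good]; good states are clean. *)
Lemma perm_ura_clean : clean perm_ura.
Proof.
apply: (table_clean (Good := good)).
- by split=> // i j d; rewrite ffunE.
- exact: good_step.
- exact: good_accepts.
- by move=> s [].
Qed.

Lemma perm_ura_universal : universal perm_ura.
Proof. exact: table_universal accepts_all. Qed.

Lemma perm_ura_unambiguous : unambiguous perm_ura.
Proof. exact: table_unambiguous accepts_unique. Qed.

Lemma perm_ura_conf :
  exists (w : word unit) l (us : seq (valuation K)),
    uniq us /\ K`! <= size us /\ (forall u, u \in us -> in_conf perm_ura w (l, u)).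
Proof.
exists (map (pair tt) (iota 0 K)), (enum_rank (pcheck_loc 0)),
  [seq regval q (iota 0 K) | q <- enum {perm 'I_K}].
split; first by rewrite map_inj_uniq ?enum_uniq //; exact: regval_iota_inj.
split; first by rewrite size_map -cardE card_Sn.
move=> u /mapP [q _ ->]; have [rho [Hr Hl]] := perm_branch_reached q.
by have := table_in_conf accepting tr_wf Hr; rewrite Hl.
Qed.

End PermutationURA.

Theorem lemma2 :
  forall k : nat, 1 <= k ->
  exists (n : nat) (A : RA k unit n),
    clean A /\ universal A /\ unambiguous A /\
    exists (w : word unit) (l : 'I_n) (us : seq (valuation k)),
      uniq us /\ k`! <= size us /\
      (forall u, u \in us -> in_conf A w (l, u)).
Proof.
case=> [//|k'] _; exists _, (perm_ura k').
split; first exact: perm_ura_clean.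
split; first exact: perm_ura_universal.
split; first exact: perm_ura_unambiguous.
exact: perm_ura_conf.
Qed.
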